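(* If $G$ is a connected graph, then $D(G)\le \dim(G)+1$. Moreover, the bound is sharp (e.g. equality holds for every path $P_n$, $n\ge 2$).
   Context: All graphs are finite and simple. For a connected graph $G$ with shortest-path distance $d_G$, a set $S\subseteq V(G)$ is resolving if for any two distinct vertices $x,y$ there is $s\in S$ with $d_G(x,s)\neq d_G(y,s)$; the metric dimension $\dim(G)$ is the minimum size of a resolving set. A distinguishing coloring of a graph $G$ is a (not necessarily proper) vertex coloring such that the only automorphism of $G$ mapping every vertex to a vertex of the same color is the identity; the distinguishing number $D(G)$ is the minimum number of colors in a distinguishing coloring of $G$. *)

From mathcomp Require Import all_boot fingroup perm.
Local Open Scope nat_scope.
Set Implicit Arguments. Unset Strict Implicit. Unset Printing Implicit Defensive.

Section Graphs.
Variables (T : finType) (e : rel T).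

Definition simple_graph := symmetric e /\ irreflexive e.

Definition connected_graph := forall x y : T, connect e x y.

Definition walk_of_length (k : nat) (x y : T) : bool :=
  [exists p : k.-tuple T, path e x p && (last x p == y)].

(* shortest-path distance: least k with a walk of length k from x to y
   (a shortest walk has < #|T| edges; default #|T| if unreachable, which
   never happens in a connected graph) *)
Definition gdist (x y : T) : nat :=
  \big[minn/#|T|]_(k < #|T| | walk_of_length k x y) (k : nat).

Definition resolving (S : {set T}) : bool :=
  [forall x, forall y, (x != y) ==> [exists s in S, gdist x s != gdist y s]].

(* metric dimension: minimum size of a resolving set (setT is resolving) *)
Definition metric_dim : nat :=
  \big[minn/#|T|]_(S : {set T} | resolving S) #|S|.

Definition is_automorphism (s : {perm T}) : bool :=
  [forall x, forall y, e (s x) (s y) == e x y].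

Definition distinguishing (k : nat) (c : {ffun T -> 'I_k}) : bool :=
  [forall s : {perm T},
     (is_automorphism s && [forall x, c (s x) == c x]) ==> (s == 1%g)].

(* distinguishing number: least k admitting a distinguishing k-colouring
   (k = #|T| always works via an injective colouring) *)
Definition distinguishing_number : nat :=
  \big[minn/#|T|]_(k < #|T|.+1 | [exists c : {ffun T -> 'I_k}, distinguishing c])
     (k : nat).

End Graphs.

Definition path_graph (n : nat) : rel 'I_n :=
  fun i j => (i.+1 == j :> nat) || (j.+1 == i :> nat).
Arguments path_graph n : clear implicits.

From mathcomp Require Import all_boot fingroup perm.
From mathcomp Require Import zify.
Local Open Scope nat_scope.
Set Implicit Arguments. Unset Strict Implicit.

(* An automorphism preserves distances, so one that fixes a resolving set S
   pointwise fixes every vertex: [d(s x, v) = d(x, v)] for all v in S.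
   Colouring the vertices of a minimum resolving set with pairwise distinct
   colours 1, ..., dim G and all other vertices with 0 therefore gives a
   distinguishing colouring with dim G + 1 colours.  For the path P_n one
   end vertex resolves, while the reflection preserves every 1-colouring. *)

Section BigMinn.
Variables (I : Type) (r : seq I) (P : pred I) (F : I -> nat) (d : nat).

Lemma bigminn_le_idx : \big[minn/d]_(i <- r | P i) F i <= d.
Proof. by elim/big_rec: _ => // i m _; apply: leq_trans (geq_minr _ _). Qed.

Lemma leq_bigminn m :
  m <= d -> (forall i, P i -> m <= F i) -> m <= \big[minn/d]_(i <- r | P i) F i.
Proof. by move=> md mF; elim/big_rec: _ => // i x /mF; rewrite leq_min => ->. Qed.

End BigMinn.

Lemma bigminn_le (I : eqType) (r : seq I) (P : pred I) (F : I -> nat) d i :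
  i \in r -> P i -> \big[minn/d]_(j <- r | P j) F j <= F i.
Proof.
elim: r => // a r IHr; rewrite inE big_cons => /orP[/eqP<- -> | ir Pi].
  exact: geq_minl.
by case: (P a); [apply: leq_trans (geq_minr _ _) _|]; apply: IHr.
Qed.

Section GraphInvariants.
Variables (T : finType) (e : rel T).

Lemma gdist_le k x y : k < #|T| -> walk_of_length e k x y -> gdist e x y <= k.
Proof.
move=> kT walk; rewrite /gdist -[k]/(nat_of_ord (Ordinal kT)).
exact: (bigminn_le (fun i : 'I_#|T| => i : nat)) (mem_index_enum _) walk.
Qed.

Lemma leq_gdist m x y :
  m <= #|T| -> (forall k, walk_of_length e k x y -> m <= k) -> m <= gdist e x y.
Proof. by move=> mT walk; apply: leq_bigminn => // k /walk. Qed.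

Lemma metric_dim_le S : resolving e S -> metric_dim e <= #|S|.
Proof. exact: bigminn_le (mem_index_enum _). Qed.

Lemma leq_metric_dim m :
  m <= #|T| -> (forall S, resolving e S -> m <= #|S|) -> m <= metric_dim e.
Proof. exact: leq_bigminn. Qed.

Lemma distinguishing_number_le_card : distinguishing_number e <= #|T|.
Proof. exact: bigminn_le_idx. Qed.

Lemma distinguishing_number_le k (c : {ffun T -> 'I_k}) :
  k <= #|T| -> distinguishing e c -> distinguishing_number e <= k.
Proof.
rewrite -ltnS => kT dc; rewrite /distinguishing_number -[k]/(nat_of_ord (Ordinal kT)).
apply: (bigminn_le (fun i : 'I_#|T|.+1 => i : nat)) (mem_index_enum _) _.
by apply/existsP; exists c.
Qed.

Lemma leq_distinguishing_number m :
  m <= #|T| -> (forall k (c : {ffun T -> 'I_k}), distinguishing e c -> m <= k) ->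
  m <= distinguishing_number e.
Proof. by move=> mT dc; apply: leq_bigminn => // k /existsP[c /dc]. Qed.

End GraphInvariants.

Section Automorphisms.
Variables (T : finType) (e : rel T).

Lemma is_automorphismP (s : {perm T}) :
  reflect (forall x y, e (s x) (s y) = e x y) (is_automorphism e s).
Proof.
apply: (iffP forallP) => [sA x y | sA x]; last by apply/forallP => y; rewrite sA.
by apply/eqP; have /forallP := sA x.
Qed.

Lemma is_automorphismV (s : {perm T}) :
  is_automorphism e s -> is_automorphism e s^-1.
Proof.
move=> /is_automorphismP sA; apply/is_automorphismP => x y.
by rewrite -{2}(permKV s x) -{2}(permKV s y) sA.
Qed.

Lemma walk_of_length_aut (s : {perm T}) k x y : is_automorphism e s ->
  walk_of_length e k x y -> walk_of_length e k (s x) (s y).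
Proof.
move=> /is_automorphismP sA /existsP[p /andP[ep /eqP <-]].
apply/existsP; exists (map_tuple s p).
by rewrite /= (mono_path (e := e)) // ep last_map /=.
Qed.

Lemma gdist_aut (s : {perm T}) x y : is_automorphism e s ->
  gdist e (s x) (s y) = gdist e x y.
Proof.
move=> sA; apply: eq_bigl => k; apply/idP/idP; last exact: walk_of_length_aut.
by move=> /(walk_of_length_aut (is_automorphismV sA)); rewrite !permK.
Qed.

Lemma aut_fixing_resolving_eq1 (S : {set T}) (s : {perm T}) :
  resolving e S -> is_automorphism e s -> {in S, forall v, s v = v} -> s = 1%g.
Proof.
move=> Sres sA sS; apply/permP => x; rewrite perm1; apply/eqP/negPn/negP => sx_x.
have /existsP[v /andP[vS]] := implyP (forallP (forallP Sres (s x)) x) sx_x.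
by rewrite -{1}(sS v vS) gdist_aut ?eqxx.
Qed.

Section ResolvingColouring.
Variable S : {set T}.

Definition resolving_colouring : {ffun T -> 'I_#|S|.+1} :=
  [ffun x => inord (if x \in S then (index x (enum S)).+1 else 0)].

Lemma resolving_colouringE x :
  (resolving_colouring x : nat) = if x \in S then (index x (enum S)).+1 else 0.
Proof.
rewrite ffunE inordK //; case: ifP => // xS.
by rewrite ltnS cardE index_mem mem_enum.
Qed.

Lemma resolving_colouring_fixed (s : {perm T}) :
  (forall x, resolving_colouring (s x) = resolving_colouring x) ->
  {in S, forall v, s v = v}.
Proof.
move=> sc v vS; have /(congr1 val) := sc v; rewrite /= !resolving_colouringE vS.
case: ifP => // svS [/(index_inj v)]; by apply; rewrite mem_enum.
Qed.

Lemma resolving_colouring_distinguishing :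
  resolving e S -> distinguishing e resolving_colouring.
Proof.
move=> Sres; apply/forallP => s; apply/implyP => /andP[sA /forallP sc].
apply/eqP/(aut_fixing_resolving_eq1 Sres sA)/resolving_colouring_fixed => x.
exact/eqP/sc.
Qed.

End ResolvingColouring.

Lemma distinguishing_number_le_resolving S :
  resolving e S -> distinguishing_number e <= #|S| + 1.
Proof.
rewrite addn1 => Sres; have [ST | TS] := leqP #|T| #|S|.
  exact: leq_trans (distinguishing_number_le_card e) (leqW ST).
exact: distinguishing_number_le (resolving_colouring_distinguishing Sres).
Qed.

Lemma distinguishing_number_le_metric_dim :
  distinguishing_number e <= metric_dim e + 1.
Proof.
rewrite addnC -leq_subLR; apply: leq_metric_dim => [|S Sres].
  exact: leq_trans (leq_subr _ _) (distinguishing_number_le_card e).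
by rewrite leq_subLR addnC distinguishing_number_le_resolving.
Qed.

End Automorphisms.

Section PathGraph.
Variable n : nat.
Local Notation P := (path_graph n.+2).

Lemma path_graph_walk_bound (x : 'I_n.+2) (p : seq 'I_n.+2) :
  path P x p -> x <= last x p + size p.
Proof.
elim: p x => [|y p IHp] x /=; first by rewrite addn0.
by case/andP=> /orP[] /eqP xy /IHp; lia.
Qed.

Lemma path_graph_walk_to0 (x : 'I_n.+2) : walk_of_length P x x ord0.
Proof.
suff walk_down m (y : 'I_n.+2) : y = m :> nat ->
    exists p : seq 'I_n.+2, [/\ size p = m, path P y p & last y p = ord0].
  have [p [size_p walk_p last_p]] := walk_down x x erefl.
  by apply/existsP; exists (Tuple (introT eqP size_p)); rewrite /= walk_p last_p.
elim: m y => [|m IHm] y ym.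
  by exists [::]; split=> //; apply: val_inj.
have mn : m < n.+2 by rewrite (leq_trans _ (ltn_ord y)) // ym.
have [p [size_p walk_p last_p]] := IHm (inord m) (inordK mn).
exists (inord m :: p); split=> /=; [by rewrite size_p | | by []].
by rewrite walk_p andbT /path_graph inordK // ym eqxx orbT.
Qed.

Lemma gdist_path_graph0 (x : 'I_n.+2) : gdist P x ord0 = x.
Proof.
apply/eqP; rewrite eqn_leq gdist_le ?card_ord ?path_graph_walk_to0 //=.
apply: leq_gdist => [|k /existsP[p /andP[walk_p /eqP last_p]]].
  by rewrite card_ord ltnW.
by have := path_graph_walk_bound walk_p; rewrite last_p size_tuple.
Qed.

Lemma metric_dim_path_graph : metric_dim P = 1.
Proof.
apply/eqP; rewrite eqn_leq; apply/andP; split.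
  rewrite -(cards1 (ord0 : 'I_n.+2)); apply: metric_dim_le.
  apply/forallP => x; apply/forallP => y; apply/implyP => xy.
  apply/existsP; exists ord0; rewrite set11 /= !gdist_path_graph0.
  by apply: contra xy => /eqP/val_inj->.
apply: leq_metric_dim => [|S /forallP/(_ ord0)/forallP/(_ ord_max)/implyP Sres].
  by rewrite card_ord.
by have /existsP[v /andP[vS _]] := Sres isT; apply/card_gt0P; exists v.
Qed.

Definition path_graph_reflection : {perm 'I_n.+2} := perm (@rev_ord_inj n.+2).

Lemma path_graph_reflection_aut : is_automorphism P path_graph_reflection.
Proof.
apply/is_automorphismP => x y; rewrite !permE /path_graph /=.
have := ltn_ord x; have := ltn_ord y; move: (x : nat) (y : nat) => a b bn an.
by apply/idP/idP => /orP[] /eqP ab; apply/orP; [right | left | right | left];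
  apply/eqP; lia.
Qed.

Lemma path_graph_reflection_neq1 : path_graph_reflection != 1%g.
Proof. by apply/eqP => /permP/(_ ord0)/(congr1 val); rewrite permE perm1. Qed.

Lemma distinguishing_number_path_graph : distinguishing_number P = 2.
Proof.
apply/eqP; rewrite eqn_leq; apply/andP; split.
  by have := distinguishing_number_le_metric_dim P; rewrite metric_dim_path_graph.
apply: leq_distinguishing_number => [|[|[|k]] c dc //]; first by rewrite card_ord.
  by case: (c ord0).
have /implyP := forallP dc path_graph_reflection.
rewrite path_graph_reflection_aut (negPf path_graph_reflection_neq1) /=.
by apply; apply/forallP => x; rewrite !ord1.
Qed.

End PathGraph.

Theorem proposition3p1 :
  (forall (T : finType) (e : rel T),
     simple_graph e -> connected_graph e ->
     distinguishing_number e <= metric_dim e + 1) /\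
  (forall n : nat, 2 <= n ->
     distinguishing_number (path_graph n) = metric_dim (path_graph n) + 1).
Proof.
split=> [T e _ _ | [|[|n]] // _]; first exact: distinguishing_number_le_metric_dim.
by rewrite distinguishing_number_path_graph metric_dim_path_graph.
Qed.
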